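(* Suppose $N>n$. Then: (i) $r^{(2)}\ge\frac nN+\sqrt{\frac{n(N-n)}{N^2(N-1)}}$. (ii) If there exists a $2$-uniform $(N,n)$ dual pair for $\mathcal H$, then (a) $r^{(2)}=\frac nN+\sqrt{\frac{n(N-n)}{N^2(N-1)}}$, and (b) an $(N,n)$ dual pair $(F,G)$ belongs to $\mathcal R^{(2)}$ if and only if $(F,G)$ is $2$-uniform.
   Context: $\mathcal H$ is a complex Hilbert space of finite dimension $n$, inner product linear in the first argument. A finite sequence $F=\{f_i\}_{i=1}^N$ is a frame if there are $0<A\le B$ with $A\|f\|^2\le\sum_i|\langle f,f_i\rangle|^2\le B\|f\|^2$ for all $f$. $G=\{g_i\}_{i=1}^N$ is a dual of $F$ if $f=\sum_i\langle f,g_i\rangle f_i$ for all $f$; $(F,G)$ is then an $(N,n)$ dual pair. A dual pair is $1$-uniform if $\langle f_i,g_i\rangle$ is independent of $i$, and $2$-uniform if it is $1$-uniform and $\langle f_i,g_j\rangle\langle f_j,g_i\rangle$ is the same constant for all $i\ne j$. $\mathcal A_m$ is the set of $m$-element subsets of $\{1,\dots,N\}$; $E_{\Lambda,F,G}f=\sum_{i\in\Lambda}\langle f,f_i\rangle g_i$; $\rho$ is spectral radius; $r^{(m)}_{F,G}=\max_{\Lambda\in\mathcal A_m}\rho(E_{\Lambda,F,G})$; $r^{(1)}=\inf\{r^{(1)}_{F,G}:(F,G)\text{ an }(N,n)\text{ dual pair}\}$; $\mathcal R^{(1)}=\{(F,G):r^{(1)}_{F,G}=r^{(1)}\}$; $r^{(2)}=\inf\{r^{(2)}_{F,G}:(F,G)\in\mathcal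 R^{(1)}\}$; $\mathcal R^{(2)}=\{(F,G)\in\mathcal R^{(1)}:r^{(2)}_{F,G}=r^{(2)}\}$. *)

From mathcomp Require Import all_boot all_order all_algebra.
From mathcomp Require Import all_classical all_reals ereal.
From mathcomp Require Import complex.
Set Implicit Arguments. Unset Strict Implicit. Unset Printing Implicit Defensive.
Import Order.TTheory GRing.Theory Num.Theory.
Local Open Scope ring_scope.
Local Open Scope classical_set_scope.

Section Frames.
Variable R : realType.
Local Notation C := R[i].

Definition inner (n : nat) (x y : 'cV[C]_n) : C :=
  \sum_(k < n) x k ord0 * (y k ord0)^*.

Definition cmod (z : C) : R := complex.Re `|z|.

Definition is_frame (n N : nat) (F : 'I_N -> 'cV[C]_n) : Prop :=
  exists A B : R, 0 < A /\ A <= B /\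
    forall f : 'cV[C]_n,
      A * cmod (inner f f) <= \sum_(i < N) cmod (inner f (F i)) ^+ 2 /\
      \sum_(i < N) cmod (inner f (F i)) ^+ 2 <= B * cmod (inner f f).

Definition is_dual (n N : nat) (F G : 'I_N -> 'cV[C]_n) : Prop :=
  forall f : 'cV[C]_n, f = \sum_(i < N) inner f (G i) *: F i.

Definition dual_pair (n N : nat) (F G : 'I_N -> 'cV[C]_n) : Prop :=
  is_frame F /\ is_dual F G.

Definition one_uniform (n N : nat) (F G : 'I_N -> 'cV[C]_n) : Prop :=
  exists c : C, forall i : 'I_N, inner (F i) (G i) = c.

Definition two_uniform (n N : nat) (F G : 'I_N -> 'cV[C]_n) : Prop :=
  one_uniform F G /\
  exists d : C, forall i j : 'I_N, i != j ->
    inner (F i) (G j) * inner (F j) (G i) = d.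

(* E_{Lambda,F,G} f = sum_{i in Lambda} <f, f_i> g_i, as the matrix
   sum_{i in Lambda} g_i f_i^*  (so that E *m f = sum <f,f_i> g_i). *)
Definition E_op (n N : nat) (L : {set 'I_N}) (F G : 'I_N -> 'cV[C]_n)
  : 'M[C]_n :=
  \sum_(i in L) (G i *m (map_mx Num.conj (F i))^T).

Definition spec_rad (n : nat) (A : 'M[C]_n) : R :=
  sup [set cmod l | l in [set l : C | eigenvalue A l]].

Definition r_m (n N : nat) (m : nat) (F G : 'I_N -> 'cV[C]_n) : R :=
  \big[Num.max/0]_(L : {set 'I_N} | #|L| == m) spec_rad (E_op L F G).

Definition dual_pairs (n N : nat)
  : set (('I_N -> 'cV[C]_n) * ('I_N -> 'cV[C]_n)) :=
  [set FG | dual_pair FG.1 FG.2].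
Arguments dual_pairs n N : clear implicits.

(* r^{(1)} : infimum of r^{(1)}_{F,G} over all (N, n) dual pairs,
   taken in the extended reals (inf of the empty set is +oo) *)
Definition r1 (n N : nat) : \bar R :=
  ereal_inf [set (r_m 1 FG.1 FG.2)%:E | FG in dual_pairs n N].
Arguments r1 n N : clear implicits.

Definition R1 (n N : nat) : set (('I_N -> 'cV[C]_n) * ('I_N -> 'cV[C]_n)) :=
  [set FG | dual_pair FG.1 FG.2 /\ (r_m 1 FG.1 FG.2)%:E = r1 n N].
Arguments R1 n N : clear implicits.

Definition r2 (n N : nat) : \bar R :=
  ereal_inf [set (r_m 2 FG.1 FG.2)%:E | FG in R1 n N].
Arguments r2 n N : clear implicits.

Definition R2 (n N : nat) : set (('I_N -> 'cV[C]_n) * ('I_N -> 'cV[C]_n)) :=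
  [set FG | R1 n N FG /\ (r_m 2 FG.1 FG.2)%:E = r2 n N].
Arguments R2 n N : clear implicits.

End Frames.

Arguments dual_pairs R n N : clear implicits.
Arguments r1 R n N : clear implicits.
Arguments R1 R n N : clear implicits.
Arguments r2 R n N : clear implicits.
Arguments R2 R n N : clear implicits.

From mathcomp Require Import all_boot all_order all_algebra.
From mathcomp Require Import all_classical all_reals ereal.
From mathcomp Require Import complex.
From mathcomp Require Import cyclic separable cyclotomic.
From mathcomp Require Import ring lra.
Import Order.TTheory GRing.Theory Num.Theory.
Local Open Scope ring_scope.

(* Duality says sum_i f_i g_i^* = I; taking traces, sum_i <f_i, g_i> = n.  Since
   rho(E_{i}) = |<f_i, g_i>|, this gives r^(1)_{F,G} >= n/N =: c, with equality
   exactly when every <f_i, g_i> equals c; a harmonic frame attains it, so R^(1)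
   consists of the dual pairs with constant diagonal c.  For such a pair, a nonzero
   eigenvalue l of E_{i,j} satisfies (l - c)^2 = conj z_ij with
   z_ij = <f_i, g_j><f_j, g_i>, and duality again gives
   sum_{j <> i} z_ij = c - c^2 = (N - 1) d with d = n(N - n)/(N^2(N - 1)).  Hence
   some z_ij has real part >= d, which yields an eigenvalue of modulus
   >= c + sqrt d.  If r^(2)_{F,G} = c + sqrt d, every z_ij has real part <= d, the
   average forces equality, and equality in the square-root estimate forces
   z_ij = d: the pair is 2-uniform.  Conversely a 2-uniform pair has z_ij = d for
   all i <> j and attains the bound. *)

Section ComplexModulus.
Context {R : realType}.
Implicit Types (a : R) (x y z : R[i]).

Lemma cmod_normC z : ((cmod z)%:C)%C = `|z|.
Proof. by rewrite /cmod normc_def. Qed.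

Lemma cmod_ge0 z : 0 <= cmod z.
Proof. by rewrite -(@ler0c R) cmod_normC. Qed.

Lemma cmodM x y : cmod (x * y) = cmod x * cmod y.
Proof. by apply: (@complexI R); rewrite rmorphM /= !cmod_normC normrM. Qed.

Lemma ler_cmodD x y : cmod (x + y) <= cmod x + cmod y.
Proof. by rewrite -(@lecR R) rmorphD /= !cmod_normC ler_normD. Qed.

Lemma cmod_realC a : cmod (a%:C)%C = `|a|.
Proof. by rewrite /cmod normc_def /= expr0n addr0 sqrtr_sqr. Qed.

Lemma cmodJ z : cmod z^* = cmod z.
Proof. by apply: (@complexI R); rewrite !cmod_normC norm_conjC. Qed.

Lemma Re_le_cmod z : complex.Re z <= cmod z.
Proof.
rewrite -(@lecR R) cmod_normC; apply: le_trans (normc_ge_Re z).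
by rewrite lecR ler_norm.
Qed.

Lemma sqr_cmod z : (((cmod z) ^+ 2)%:C)%C = z * z^*.
Proof. by rewrite rmorphXn /= cmod_normC normCK. Qed.

Lemma conjC_realC a : ((a%:C)%C : R[i])^* = (a%:C)%C.
Proof. by apply/eqP; rewrite eq_complex /= oppr0 !eqxx. Qed.

Lemma Re_conjC z : complex.Re z^* = complex.Re z.
Proof. by case: z. Qed.

End ComplexModulus.

Section ShiftedSquareRoot.
Context {R : realType}.
Implicit Types (c D : R) (z l : R[i]).

(* [sqrtc] returns the square root with nonnegative real part, so [c%:C + sqrtc z]
   is the solution of [(l - c)^2 = z] of largest modulus. *)
Lemma sqrtc_Re_ge0 z : 0 <= complex.Re (sqrtc z).
Proof. by case: z => a b; rewrite /sqrtc /= sqrtr_ge0. Qed.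

Lemma cmod_shifted_root_le c z l :
  0 <= c -> (l - (c%:C)%C) ^+ 2 = z -> cmod l <= c + Num.sqrt (cmod z).
Proof.
move=> c_ge0 lz.
have cmod_root : cmod (l - (c%:C)%C) = Num.sqrt (cmod z).
  by rewrite -lz expr2 cmodM -expr2 sqrtr_sqr ger0_norm // cmod_ge0.
have := ler_cmodD (c%:C)%C (l - (c%:C)%C).
by rewrite addrC subrK cmod_realC ger0_norm // cmod_root addrC.
Qed.

Lemma shifted_sqrtc_root c z : ((c%:C)%C + sqrtc z - (c%:C)%C) ^+ 2 = z.
Proof. by rewrite [_ + sqrtc z]addrC addrK sqr_sqrtc. Qed.

Lemma shifted_sqrtc_neq0 c z : 0 < c -> (c%:C)%C + sqrtc z != 0.
Proof.
move=> c_gt0; apply/eqP => /(congr1 (@complex.Re R)) /=.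
by have := sqrtc_Re_ge0 z; case: (sqrtc z) => a b /=; lra.
Qed.

Lemma cmod_shifted_sqrtc_ge c z :
  0 <= c -> c + Num.sqrt (complex.Re z) <= cmod ((c%:C)%C + sqrtc z).
Proof.
move=> c_ge0; have := sqr_sqrtc z; have := sqrtc_Re_ge0 z.
have := Re_le_cmod ((c%:C)%C + sqrtc z).
case: (sqrtc z) => a b /= le_Re a_ge0 <-; apply: le_trans le_Re; rewrite lerD2l.
have Re_sqr : complex.Re ((a +i* b)%C ^+ 2) <= a ^+ 2.
  by rewrite expr2 /=; have := sqr_ge0 b; rewrite !expr2; lra.
by rewrite (le_trans (ler_wsqrtr Re_sqr)) // sqrtr_sqr ger0_norm.
Qed.

Lemma cmod_shifted_sqrtc_le c D z :
  0 <= c -> 0 <= D -> cmod ((c%:C)%C + sqrtc z) <= c + Num.sqrt D ->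
  complex.Re z <= D /\ (D <= complex.Re z -> z = (D%:C)%C).
Proof.
move=> c_ge0 D_ge0; have := sqr_sqrtc z; have := sqrtc_Re_ge0 z.
have := Re_le_cmod ((c%:C)%C + sqrtc z).
case: (sqrtc z) => a b /= le_Re a_ge0 <- le_sqrt.
have a_sqr_le : a ^+ 2 <= D.
  have a_le : a <= Num.sqrt D by lra.
  by rewrite -(sqr_sqrtr D_ge0) ler_sqr ?nnegrE ?sqrtr_ge0.
rewrite expr2 /=; have := sqr_ge0 b; rewrite !expr2 => b_sqr_ge0.
split=> [|le_D]; first lra.
have b0 : b = 0 by apply/eqP; rewrite -sqrf_eq0 expr2; apply/eqP; nra.
by apply/eqP; rewrite eq_complex /= b0; apply/andP; split; apply/eqP; [nra | ring].
Qed.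

End ShiftedSquareRoot.

Section InnerProduct.
Context {R : realType} {n : nat}.
Implicit Types (x y : 'cV[R[i]]_n) (a : R[i]).

Lemma inner_conj x y : (inner x y)^* = inner y x.
Proof.
rewrite /inner rmorph_sum; apply: eq_bigr => k _.
by rewrite rmorphM /= conjCK mulrC.
Qed.

Lemma innerZl a x y : inner (a *: x) y = a * inner x y.
Proof. by rewrite /inner mulr_sumr; apply: eq_bigr => k _; rewrite mxE mulrA. Qed.

Lemma innerZr a x y : inner x (a *: y) = a^* * inner x y.
Proof.
by rewrite /inner mulr_sumr; apply: eq_bigr => k _; rewrite mxE rmorphM mulrCA.
Qed.

Lemma inner_suml (I : finType) (c : I -> R[i]) (u : I -> 'cV[R[i]]_n) y :
  inner (\sum_j c j *: u j) y = \sum_j c j * inner (u j) y.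
Proof.
rewrite /inner; under eq_bigr => k _ do rewrite summxE mulr_suml.
rewrite exchange_big /=; apply: eq_bigr => j _; rewrite mulr_sumr.
by apply: eq_bigr => k _; rewrite mxE mulrA.
Qed.

Lemma inner_ge0 x : 0 <= inner x x.
Proof. by rewrite /inner sumr_ge0 // => k _; rewrite mul_conjC_ge0. Qed.

End InnerProduct.

Definition cross {R : realType} {n N : nat} (F G : 'I_N -> 'cV[R[i]]_n)
  (i j : 'I_N) : R[i] :=
  inner (F i) (G j) * inner (F j) (G i).

Section DualPair.
Context {R : realType} {n N : nat} {F G : 'I_N -> 'cV[R[i]]_n}.

Hypothesis FG_dual : is_dual F G.

Lemma sum_inner_diag : \sum_i inner (F i) (G i) = n%:R.
Proof.
have coord_sum k : \sum_i (G i k ord0)^* * F i k ord0 = 1.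
  have := FG_dual (delta_mx k ord0) => /(congr1 (fun u : 'cV_n => u k ord0)).
  rewrite mxE !eqxx /= summxE => delta_k; rewrite [RHS]delta_k.
  apply: eq_bigr => i _.
  rewrite mxE /inner (bigD1 k) //= mxE !eqxx mul1r big1 ?addr0 // => l lk.
  by rewrite mxE (negPf lk) mul0r.
rewrite exchange_big /= -[n in n%:R]card_ord -sumr_const.
by apply: eq_bigr => k _; rewrite -(coord_sum k); apply: eq_bigr => i _; rewrite mulrC.
Qed.

Lemma sum_cross (i : 'I_N) : \sum_j cross F G i j = inner (F i) (G i).
Proof. by rewrite [in RHS](FG_dual (F i)) inner_suml. Qed.

Lemma sum_cross_neq (c : R) (i : 'I_N) :
  (forall k, inner (F k) (G k) = (c%:C)%C) ->
  \sum_(j | j != i) cross F G i j = ((c - c ^+ 2)%:C)%C.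
Proof.
move=> diag_c; have := sum_cross i; rewrite (bigD1 i) //= /cross !diag_c.
by move=> /(canRL (addKr _)) ->; rewrite rmorphB rmorphXn /= expr2 addrC.
Qed.

End DualPair.

Section EOpSpectrum.
Context {R : realType} {n N : nat} {F G : 'I_N -> 'cV[R[i]]_n}.

Definition row_adj (x : 'cV[R[i]]_n) : 'rV[R[i]]_n := (map_mx Num.conj x)^T.

Lemma row_adj_mulmx (x y : 'cV[R[i]]_n) : (row_adj x *m y) 0 0 = (inner x y)^*.
Proof.
rewrite mxE /inner rmorph_sum; apply: eq_bigr => k _.
by rewrite !mxE rmorphM /= conjCK mulrC.
Qed.

Lemma scale_mulmx00 (a : R[i]) (u : 'rV[R[i]]_n) (y : 'cV[R[i]]_n) :
  ((a *: u) *m y) 0 0 = a * (u *m y) 0 0.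
Proof. by rewrite -scalemxAl mxE. Qed.

Lemma row_adj_comb_mulmx (a b : R[i]) (x y g : 'cV[R[i]]_n) :
  ((a *: row_adj x + b *: row_adj y) *m g) 0 0 =
  a * (inner x g)^* + b * (inner y g)^*.
Proof. by rewrite mulmxDl [LHS]mxE !scale_mulmx00 !row_adj_mulmx. Qed.

(* [eigenvalue] refers to the row action [v *m A], under which [E_op] takes values
   in the span of the conjugate transposes of the [F i]; this is why conjugated
   inner products appear in its spectrum. *)
Lemma mulmx_E_op (L : {set 'I_N}) (v : 'rV[R[i]]_n) :
  v *m E_op L F G = \sum_(i in L) (v *m G i) 0 0 *: row_adj (F i).
Proof.
rewrite /E_op mulmx_sumr; apply: eq_bigr => i _.
by rewrite mulmxA {1}[v *m G i]mx11_scalar mul_scalar_mx.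
Qed.

Lemma E_op_eigenvector_coord {L : {set 'I_N}} {v : 'rV[R[i]]_n} {l : R[i]} :
  v *m E_op L F G = l *: v -> l != 0 -> v != 0 ->
  [exists i in L, (v *m G i) 0 0 != 0].
Proof.
move=> vE l_neq0; apply: contraTT => /exists_inPn coord0.
move: vE; rewrite mulmx_E_op big1 => [/esym/eqP|i iL].
  by rewrite scaler_eq0 (negPf l_neq0) negbK.
by move/negbNE/eqP: (coord0 i iL) => ->; rewrite scale0r.
Qed.

Lemma eigenvalue_E_op1 {i : 'I_N} {l : R[i]} :
  eigenvalue (E_op [set i] F G) l -> l != 0 -> l = (inner (F i) (G i))^*.
Proof.
case/eigenvalueP => v vE v_neq0 l_neq0.
have /exists_inP [k] := E_op_eigenvector_coord vE l_neq0 v_neq0.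
rewrite inE => /eqP -> {k} s_neq0.
have := congr1 (fun u => (u *m G i) 0 0) vE.
rewrite mulmx_E_op big_set1 /= !scale_mulmx00 row_adj_mulmx => coord_i.
by apply: (mulIf s_neq0); rewrite -coord_i mulrC.
Qed.

Lemma eigenvalue_E_op2 {i j : 'I_N} {l : R[i]} :
  i != j -> eigenvalue (E_op [set i; j] F G) l -> l != 0 ->
  (l - (inner (F i) (G i))^*) * (l - (inner (F j) (G j))^*) = (cross F G i j)^*.
Proof.
move=> ij /eigenvalueP [v vE v_neq0] l_neq0.
have /exists_inP [k k_ij s_neq0] := E_op_eigenvector_coord vE l_neq0 v_neq0.
move: vE; rewrite mulmx_E_op big_setU1 ?inE // big_set1 => vE.
set si := (v *m G i) 0 0 in vE s_neq0 *; set sj := (v *m G j) 0 0 in vE s_neq0 *.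
have coord_i := congr1 (fun u => (u *m G i) 0 0) vE.
have coord_j := congr1 (fun u => (u *m G j) 0 0) vE.
rewrite /= row_adj_comb_mulmx scale_mulmx00 -/si in coord_i.
rewrite /= row_adj_comb_mulmx scale_mulmx00 -/sj in coord_j.
rewrite /cross rmorphM /=.
set a := (inner (F i) (G i))^* in coord_i *; set e := (inner (F j) (G j))^* in coord_j *.
set b := (inner (F j) (G i))^* in coord_i *; set b' := (inner (F i) (G j))^* in coord_j *.
apply/eqP; rewrite -subr_eq0; set X := _ - _.
have X_si : X * si = 0.
  have -> : X * si = (l - e) * (l * si - (si * a + sj * b)) +
                     b * (l * sj - (si * b' + sj * e)) by rewrite /X; ring.
  by rewrite coord_i coord_j !subrr !mulr0 addr0.
have X_sj : X * sj = 0.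
  have -> : X * sj = (l - a) * (l * sj - (si * b' + sj * e)) +
                     b' * (l * si - (si * a + sj * b)) by rewrite /X; ring.
  by rewrite coord_i coord_j !subrr !mulr0 addr0.
move: k_ij s_neq0; rewrite !inE => /orP [] /eqP -> s_neq0.
  by apply/eqP/(mulIf s_neq0); rewrite mul0r.
by apply/eqP/(mulIf s_neq0); rewrite mul0r.
Qed.

Lemma eigenvalue_E_op2_root (c : R) (i j : 'I_N) (l : R[i]) :
  i != j -> inner (F i) (G i) = (c%:C)%C -> inner (F j) (G j) = (c%:C)%C ->
  inner (F j) (G i) != 0 -> l != 0 -> (l - (c%:C)%C) ^+ 2 = (cross F G i j)^* ->
  eigenvalue (E_op [set i; j] F G) l.
Proof.
move=> ij diag_i diag_j inner_ji_neq0 l_neq0 root_l; apply/eigenvalueP.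
rewrite /cross rmorphM /= mulrC in root_l.
set b := (inner (F j) (G i))^* in root_l; set b' := (inner (F i) (G j))^* in root_l.
have b_neq0 : b != 0 by rewrite conjC_eq0.
pose v := b *: row_adj (F i) + (l - (c%:C)%C) *: row_adj (F j).
have si : (v *m G i) 0 0 = b * l by rewrite row_adj_comb_mulmx diag_i conjC_realC; ring.
have sj : (v *m G j) 0 0 = (l - (c%:C)%C) * l.
  by rewrite row_adj_comb_mulmx diag_j conjC_realC -/b' -root_l; ring.
exists v.
  rewrite mulmx_E_op big_setU1 ?inE // big_set1 si sj /v scalerDr !scalerA.
  by rewrite [l * b]mulrC [l * (l - _)]mulrC.
apply: contra_neq (mulf_neq0 b_neq0 l_neq0) => v0.
by rewrite -si v0 mul0mx mxE.
Qed.

End EOpSpectrum.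

Section SpectralRadius.
Context {R : realType} {n : nat}.
Implicit Types (A : 'M[R[i]]_n) (x : R).

Lemma spec_rad_le A x :
  0 <= x -> (forall l, eigenvalue A l -> cmod l <= x) -> spec_rad A <= x.
Proof.
move=> x_ge0 ev_le; rewrite /spec_rad; set S := (X in sup X).
have [[y Sy]|S0] := pselect (exists y, S y).
  by apply: ge_sup; [exists y | move=> _ [l ev_l <-]; exact: ev_le].
suff -> : S = set0 by rewrite sup0.
by apply/seteqP; split => // y Sy; apply: S0; exists y.
Qed.

Lemma le_spec_rad A l x :
  eigenvalue A l -> (forall mu, eigenvalue A mu -> cmod mu <= x) ->
  cmod l <= spec_rad A.
Proof.
move=> ev_l ev_le; apply: ub_le_sup; last by exists l.
by exists x => _ [mu ev_mu <-]; exact: ev_le.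
Qed.

End SpectralRadius.

Section MaxSpectralRadius.
Context {R : realType} {n N : nat} {F G : 'I_N -> 'cV[R[i]]_n}.

Lemma r_m_ge0 m : 0 <= r_m m F G.
Proof. by have /bigmax_leP [] := lexx (r_m m F G). Qed.

Lemma r_m_le m x :
  0 <= x -> (forall L : {set 'I_N}, #|L| == m -> spec_rad (E_op L F G) <= x) ->
  r_m m F G <= x.
Proof. exact: bigmax_le. Qed.

Lemma spec_rad_le_r_m {m : nat} {L : {set 'I_N}} :
  #|L| == m -> spec_rad (E_op L F G) <= r_m m F G.
Proof. exact: le_bigmax_cond. Qed.

Lemma cmod_eigenvalue_E_op1_le {i : 'I_N} {l : R[i]} :
  eigenvalue (E_op [set i] F G) l -> cmod l <= cmod (inner (F i) (G i)).
Proof.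
have [-> _|l_neq0 ev_l] := eqVneq l 0.
  by rewrite -(rmorph0 (real_complex R)) cmod_realC normr0 cmod_ge0.
by rewrite (eigenvalue_E_op1 ev_l l_neq0) cmodJ.
Qed.

Lemma cmod_diag_le_r_m1 (i : 'I_N) : cmod (inner (F i) (G i)) <= r_m 1 F G.
Proof.
have [diag0|diag_neq0] := eqVneq (inner (F i) (G i)) 0.
  by rewrite diag0 -(rmorph0 (real_complex R)) cmod_realC normr0 r_m_ge0.
have card_i : #|[set i]| == 1 by rewrite cards1.

apply: le_trans (spec_rad_le_r_m card_i).
rewrite -cmodJ; apply: le_spec_rad (@cmod_eigenvalue_E_op1_le i).
apply/eigenvalueP; exists (row_adj (F i)).
  by rewrite mulmx_E_op big_set1 row_adj_mulmx.
apply: contra_neq diag_neq0 => F0; apply/eqP; rewrite -conjC_eq0.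
by rewrite -row_adj_mulmx F0 mul0mx mxE.
Qed.

Lemma r_m1_le x :
  0 <= x -> (forall i, cmod (inner (F i) (G i)) <= x) -> r_m 1 F G <= x.
Proof.
move=> x_ge0 diag_le; apply: r_m_le => // L /cards1P [i ->].
apply: spec_rad_le => // l ev_l.
exact: le_trans (cmod_eigenvalue_E_op1_le ev_l) (diag_le i).
Qed.

Section RealDiagonal.
Context {c : R}.
Hypotheses (c_ge0 : 0 <= c) (diag_c : forall k, inner (F k) (G k) = (c%:C)%C).

Lemma cmod_eigenvalue_E_op2_le {i j : 'I_N} {l : R[i]} :
  i != j -> eigenvalue (E_op [set i; j] F G) l ->
  cmod l <= c + Num.sqrt (cmod (cross F G i j)).
Proof.
move=> ij ev_l; have [->|l_neq0] := eqVneq l 0.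
  rewrite -(rmorph0 (real_complex R)) cmod_realC normr0.
  by rewrite addr_ge0 ?sqrtr_ge0.
rewrite -[cmod (cross F G i j)]cmodJ; apply: cmod_shifted_root_le => //.
by rewrite expr2 -(eigenvalue_E_op2 ij ev_l l_neq0) !diag_c conjC_realC.
Qed.

Lemma cmod_eigenvalue_pair_le_r_m2 {i j : 'I_N} {l : R[i]} :
  i != j -> eigenvalue (E_op [set i; j] F G) l -> cmod l <= r_m 2 F G.
Proof.
move=> ij ev_l; have card_ij : #|[set i; j]| == 2 by rewrite cards2 ij.
apply: le_trans (spec_rad_le_r_m card_ij).
exact: le_spec_rad ev_l (fun mu => cmod_eigenvalue_E_op2_le ij).
Qed.

Lemma r_m2_le x :
  0 <= x -> (forall i j, i != j -> c + Num.sqrt (cmod (cross F G i j)) <= x) ->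
  r_m 2 F G <= x.
Proof.
move=> x_ge0 cross_le; apply: r_m_le => // L /cards2P [i [j [ij ->]]].
apply: spec_rad_le => // l ev_l.
exact: le_trans (cmod_eigenvalue_E_op2_le ij ev_l) (cross_le i j ij).
Qed.

End RealDiagonal.

End MaxSpectralRadius.

Definition r1_value (R : realType) (n N : nat) : R := n%:R / N%:R.

Definition cross_value (R : realType) (n N : nat) : R :=
  n%:R * (N - n)%:R / (N%:R ^+ 2 * (N - 1)%:R).

Definition r2_value (R : realType) (n N : nat) : R :=
  r1_value R n N + Num.sqrt (cross_value R n N).

Section OptimalValues.
Context {R : realType} {n N : nat}.
Hypothesis ltnN : (n < N)%N.

Lemma r1_value_ge0 : 0 <= r1_value R n N.
Proof. by rewrite divr_ge0 ?ler0n. Qed.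

Lemma sum_r1_value : \sum_(i < N) ((r1_value R n N)%:C)%C = n%:R.
Proof.
rewrite sumr_const card_ord -rmorphMn /= /r1_value -mulr_natr mulfVK.
  exact: rmorph_nat.
by rewrite pnatr_eq0 -lt0n (leq_ltn_trans (leq0n n) ltnN).
Qed.

Hypothesis n_gt0 : (0 < n)%N.

Lemma r1_value_gt0 : 0 < r1_value R n N.
Proof. by rewrite divr_gt0 ?ltr0n // (ltn_trans n_gt0 ltnN). Qed.

Lemma cross_value_gt0 : 0 < cross_value R n N.
Proof.
have N_gt1 : (1 < N)%N := leq_ltn_trans n_gt0 ltnN.
by rewrite divr_gt0 ?mulr_gt0 ?exprn_gt0 ?ltr0n ?subn_gt0 // ltnW.
Qed.

Lemma cross_value_sum :
  cross_value R n N *+ (N - 1) = r1_value R n N - r1_value R n N ^+ 2.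
Proof.
have N_neq0 : (N%:R : R) != 0 by rewrite pnatr_eq0 -lt0n (ltn_trans n_gt0 ltnN).
have N1_neq0 : ((N - 1)%:R : R) != 0.
  by rewrite pnatr_eq0 subn_eq0 -ltnNge (leq_ltn_trans n_gt0 ltnN).
rewrite -mulr_natl /cross_value /r1_value (natrB _ (ltnW ltnN)).
by field; rewrite N_neq0 N1_neq0.
Qed.

End OptimalValues.

Section DiagonalBounds.
Context {R : realType} {n N : nat} {F G : 'I_N -> 'cV[R[i]]_n}.
Hypotheses (ltnN : (n < N)%N) (FG_dual : is_dual F G).

Lemma r1_value_le_r_m1 : r1_value R n N <= r_m 1 F G.
Proof.
have := congr1 (@complex.Re R) (sum_inner_diag FG_dual).
rewrite raddf_sum -(rmorph_nat (real_complex R)) /= => sum_Re.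
have : (n%:R : R) <= r_m 1 F G *+ N.
  rewrite -sum_Re -[in X in _ *+ X](card_ord N) -sumr_const; apply: ler_sum => i _.
  exact: le_trans (Re_le_cmod _) (cmod_diag_le_r_m1 i).
by rewrite /r1_value ler_pdivrMr ?ltr0n ?(leq_ltn_trans (leq0n n) ltnN) // mulr_natr.
Qed.

Lemma r_m1_le_diag :
  r_m 1 F G <= r1_value R n N -> forall i, inner (F i) (G i) = ((r1_value R n N)%:C)%C.
Proof.
move=> r_m1_le i.
have diag_le k : predT k -> `|inner (F k) (G k)| <= ((r1_value R n N)%:C)%C.
  by rewrite -cmod_normC lecR (le_trans (cmod_diag_le_r_m1 k)).
by apply: (normC_sum_upper diag_le); rewrite ?sum_inner_diag ?sum_r1_value.
Qed.

Lemma one_uniform_diag :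
  one_uniform F G -> forall i, inner (F i) (G i) = ((r1_value R n N)%:C)%C.
Proof.
move=> [d diag_d] i; rewrite diag_d; apply: (mulIf (x := (N%:R : R[i]))).
  by rewrite pnatr_eq0 -lt0n (leq_ltn_trans (leq0n n) ltnN).
have := sum_inner_diag FG_dual; under eq_bigr do rewrite diag_d.
by rewrite -(sum_r1_value ltnN) !sumr_const card_ord !mulr_natr.
Qed.

End DiagonalBounds.

Section PairBounds.
Context {R : realType} {n N : nat} {F G : 'I_N -> 'cV[R[i]]_n}.
Hypotheses (n_gt0 : (0 < n)%N) (ltnN : (n < N)%N) (FG_dual : is_dual F G).
Hypothesis diag_r1 : forall k, inner (F k) (G k) = ((r1_value R n N)%:C)%C.
Local Notation c := (r1_value R n N).
Local Notation D := (cross_value R n N).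

Let c_gt0 : 0 < c := r1_value_gt0 ltnN n_gt0.
Let D_gt0 : 0 < D := cross_value_gt0 ltnN n_gt0.

Lemma sum_Re_cross_neq (i : 'I_N) :
  \sum_(j | j != i) complex.Re (cross F G i j) = \sum_(j | j != i) D.
Proof.
rewrite -raddf_sum (sum_cross_neq FG_dual _ i diag_r1) sumr_const cardC1 card_ord.
by rewrite -subn1 cross_value_sum.
Qed.

Lemma r2_value_le_r_m2 : r2_value R n N <= r_m 2 F G.
Proof.
have N_gt1 : (1 < N)%N := leq_ltn_trans n_gt0 ltnN.
pose i : 'I_N := Ordinal (ltnW N_gt1); pose i' : 'I_N := Ordinal N_gt1.
have i'_neq : i' != i by [].
have /existsP [j /andP [j_neq D_le]] :
    [exists j, (j != i) && (D <= complex.Re (cross F G i j))].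
  apply: contraT => /existsPn no_j.
  have has_neq : has (fun j => j != i) (index_enum 'I_N).
    by apply/hasP; exists i'; rewrite ?mem_index_enum.
  have lt_D j : j != i -> complex.Re (cross F G i j) < D.
    by move=> j_neq; move: (no_j j); rewrite j_neq ltNge.
  by have := ltr_sum has_neq lt_D; rewrite sum_Re_cross_neq ltxx.
have i_neq_j : i != j by rewrite eq_sym.
set z := (cross F G i j)^*; set l := (c%:C)%C + sqrtc z.
have Re_z : complex.Re z = complex.Re (cross F G i j) by rewrite Re_conjC.
have b_neq0 : inner (F j) (G i) != 0.
  apply: contraTneq D_le => b0; rewrite /cross b0 mulr0 -ltNge /=; exact: D_gt0.
have ev_l : eigenvalue (E_op [set i; j] F G) l.
  apply: (eigenvalue_E_op2_root c); rewrite ?diag_r1 ?shifted_sqrtc_root //.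
  exact: shifted_sqrtc_neq0.
apply: le_trans (cmod_eigenvalue_pair_le_r_m2 (ltW c_gt0) diag_r1 i_neq_j ev_l).
apply: le_trans (cmod_shifted_sqrtc_ge c z (ltW c_gt0)).
by rewrite lerD2l ler_wsqrtr // Re_z.
Qed.

Lemma r_m2_le_r2_value : two_uniform F G -> r_m 2 F G <= r2_value R n N.
Proof.
move=> [_ [d cross_d]].
have N_gt1 : (1 < N)%N := leq_ltn_trans n_gt0 ltnN.
pose i : 'I_N := Ordinal (ltnW N_gt1).
have d_eq : d = (D%:C)%C.
  have N1_neq0 : ((N - 1)%:R : R[i]) != 0 by rewrite pnatr_eq0 subn_eq0 -ltnNge.
  apply: (mulIf N1_neq0); rewrite !mulr_natr -rmorphMn /= cross_value_sum //.
  rewrite -(sum_cross_neq FG_dual _ i diag_r1) (eq_bigr (fun=> d)) => [|j j_neq].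
    by rewrite sumr_const cardC1 card_ord subn1.
  by rewrite /cross cross_d // eq_sym.
apply: (r_m2_le (ltW c_gt0) diag_r1) => [|j k jk].
  by rewrite addr_ge0 ?sqrtr_ge0 // ltW.
by rewrite /cross cross_d // d_eq cmod_realC ger0_norm // ltW.
Qed.

Lemma two_uniform_of_r_m2_le : r_m 2 F G <= r2_value R n N -> two_uniform F G.
Proof.
move=> r_m2_le.
have Re_cross i j : i != j -> complex.Re (cross F G i j) <= D /\
    (D <= complex.Re (cross F G i j) -> cross F G i j = (D%:C)%C).
  move=> ij; set z := (cross F G i j)^*.
  have l_le : cmod ((c%:C)%C + sqrtc z) <= c + Num.sqrt D.
    have [b0|b_neq0] := eqVneq (inner (F j) (G i)) 0.
      rewrite /z /cross b0 mulr0 conjC0 sqrtc0 addr0 cmod_realC (ger0_norm (ltW c_gt0)).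
      by rewrite lerDl sqrtr_ge0.
    apply: le_trans r_m2_le; apply: (cmod_eigenvalue_pair_le_r_m2 (ltW c_gt0) diag_r1 ij).
    apply: (eigenvalue_E_op2_root c); rewrite ?diag_r1 ?shifted_sqrtc_root //.
    exact: shifted_sqrtc_neq0.
  have [Re_le Re_eq] := cmod_shifted_sqrtc_le _ _ _ (ltW c_gt0) (ltW D_gt0) l_le.
  rewrite Re_conjC in Re_le Re_eq; split => // /Re_eq /(congr1 Num.conj).
  by rewrite conjCK conjC_realC.
have cross_D i j : i != j -> cross F G i j = (D%:C)%C.
  move=> ij; apply: (Re_cross i j ij).2.
  have gap_ge0 k : k != i -> 0 <= D - complex.Re (cross F G i k).
    by move=> ki; rewrite subr_ge0 (Re_cross i k _).1 // eq_sym.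
  have sum_gap : \sum_(k | k != i) (D - complex.Re (cross F G i k)) = 0.
    by rewrite sumrB sum_Re_cross_neq subrr.
  have ji : j != i by rewrite eq_sym.
  by move/eqP: (psumr_eq0P gap_ge0 sum_gap ji); rewrite subr_eq0 => /eqP ->.
split; first by exists ((c%:C)%C).
by exists ((D%:C)%C) => i j ij; exact: cross_D.
Qed.

End PairBounds.

Definition harmonic_frame {R : realType} (N : nat) (w : R[i]) (n : nat) (i : 'I_N)
  : 'cV[R[i]]_n :=
  \col_(k < n) w ^+ (i * k).

Section HarmonicFrame.
Context {R : realType}.

Lemma exists_prim_root (N : nat) : (0 < N)%N -> exists w : R[i], N.-primitive_root w.
Proof.
move=> N_gt0; have [r Dp] := closed_field_poly_normal ('X^N - 1%:P : {poly R[i]}).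
rewrite (monicP _) ?monicXnsubC // scale1r in Dp.
have r_roots : all N.-unity_root r by apply/allP => z; rewrite -root_prod_XsubC -Dp.
have size_r : (N < (size r).+1)%N.
  by rewrite -(size_prod_XsubC r id) -Dp size_XnsubC.
have [|w] := hasP (has_prim_root N_gt0 r_roots _ size_r); last by exists w.
by rewrite -separable_prod_XsubC -Dp polyC1 separable_Xn_sub_1 // pnatr_eq0 -lt0n.
Qed.

Context {N : nat} {w : R[i]}.
Hypotheses (N_gt0 : (0 < N)%N) (w_prim : N.-primitive_root w).

Lemma prim_root_mulJ : w * w^* = 1.
Proof.
have norm_w : `|w| = 1.
  apply/eqP; rewrite -(pexpr_eq1 N_gt0) ?normr_ge0 //.
  by rewrite -normrX prim_expr_order // normr1.
by rewrite -normCK norm_w expr1n.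
Qed.

Lemma sum_prim_root_orth {k l : nat} : (k < N)%N -> (l < N)%N ->
  \sum_(i < N) w ^+ (i * k) * (w ^+ (i * l))^* = if k == l then N%:R else 0.
Proof.
move=> ltkN ltlN.
have term (i : 'I_N) : w ^+ (i * k) * (w ^+ (i * l))^* = (w ^+ k * w^* ^+ l) ^+ i.
  by rewrite rmorphXn /= exprMn -!exprM mulnC [(l * i)%N]mulnC.
under eq_bigr => i _ do rewrite term.
case: eqVneq => [<-|k_neq_l].
  rewrite -exprMn prim_root_mulJ expr1n.
  by under eq_bigr do rewrite expr1n; rewrite sumr_const card_ord.
set x := w ^+ k * w^* ^+ l.
have wl_x : w ^+ l * x = w ^+ k.
  by rewrite /x mulrCA -exprMn prim_root_mulJ expr1n mulr1.
have x_neq1 : x - 1 != 0.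
  rewrite subr_eq0; apply: contra_neq k_neq_l => x1; apply/eqP.
  move: wl_x; rewrite x1 mulr1 => /eqP; rewrite eq_sym (eq_prim_root_expr w_prim).
  by rewrite !modn_small.
have xN : x ^+ N = 1.
  have wN : w ^+ N = 1 := prim_expr_order w_prim.
  by rewrite /x exprMn -!exprM !(mulnC _ N) !exprM -rmorphXn wN rmorph1 !expr1n mulr1.
have := subrX1 x N; rewrite xN subrr => /esym/eqP.
by rewrite mulf_eq0 (negPf x_neq1) => /eqP.
Qed.

Lemma harmonic_frame_dual (n : nat) : (n <= N)%N ->
  is_dual (harmonic_frame N w n) (fun i => (N%:R)^-1 *: harmonic_frame N w n i).
Proof.
move=> lenN f; apply/matrixP => k j; rewrite (ord1 j) summxE.
have ltkN : (k < N)%N := leq_trans (ltn_ord k) lenN.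
under eq_bigr => i _ do rewrite mxE innerZr fmorphV /= conjC_nat mxE.
apply/esym; transitivity ((N%:R)^-1 * \sum_(l < n) f l 0 *
    \sum_(i < N) w ^+ (i * k) * (w ^+ (i * l))^*).
  rewrite mulr_sumr; under [RHS]eq_bigr => l _ do rewrite !mulr_sumr.
  rewrite [RHS]exchange_big /=; apply: eq_bigr => i _.
  rewrite /inner mulr_sumr mulr_suml; apply: eq_bigr => l _.
  by rewrite mxE; ring.
have orth (l : 'I_n) := sum_prim_root_orth ltkN (leq_trans (ltn_ord l) lenN).
under eq_bigr => l _ do rewrite orth.
rewrite (bigD1 k) //= eqxx big1 ?addr0 => [|l l_neq_k].
  by rewrite mulrCA mulVf ?mulr1 // pnatr_eq0 -lt0n.
by rewrite val_eqE eq_sym (negPf l_neq_k) mulr0.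
Qed.

End HarmonicFrame.

Lemma tight_dual_is_frame {R : realType} {n N : nat} (F : 'I_N -> 'cV[R[i]]_n) (t : R) :
  0 < t -> is_dual F (fun i => (t%:C)%C *: F i) -> is_frame F.
Proof.
move=> t_gt0 FG_dual.
have frame_sum f : \sum_(i < N) cmod (inner f (F i)) ^+ 2 = t^-1 * cmod (inner f f).
  apply: (@complexI R); rewrite rmorph_sum /=.
  under eq_bigr => i _ do rewrite sqr_cmod inner_conj.
  have frame_op : \sum_(i < N) inner f (F i) *: F i = ((t^-1)%:C)%C *: f.
    rewrite [in RHS](FG_dual f) scaler_sumr; apply: eq_bigr => i _.
    rewrite innerZr conjC_realC scalerA mulrA -rmorphM /= mulVf ?gt_eqF //.
    by rewrite rmorph1 mul1r.
  rewrite -inner_suml frame_op innerZl rmorphM /= cmod_normC ger0_norm //.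
  exact: inner_ge0.
exists t^-1, t^-1; rewrite invr_gt0 t_gt0.
by split=> //; split=> // f; rewrite frame_sum.
Qed.

Lemma exists_one_uniform_dual_pair (R : realType) {n N : nat} : (n < N)%N ->
  exists F G : 'I_N -> 'cV[R[i]]_n, dual_pair F G /\ one_uniform F G.
Proof.
move=> ltnN; have N_gt0 : (0 < N)%N := leq_ltn_trans (leq0n n) ltnN.
have [w w_prim] := @exists_prim_root R N N_gt0.
pose t : R := (N%:R)^-1; pose H := harmonic_frame N w n.
have tC : (t%:C)%C = (N%:R : R[i])^-1 by rewrite fmorphV /= rmorph_nat.
have FG_dual : is_dual H (fun i => (t%:C)%C *: H i).
  by rewrite tC; exact: harmonic_frame_dual (ltnW ltnN).
exists H, (fun i => (t%:C)%C *: H i); split; first split => //.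
  by apply: tight_dual_is_frame FG_dual; rewrite invr_gt0 ltr0n.
exists ((t%:C)%C * n%:R) => i; rewrite innerZr conjC_realC; congr (_ * _).
rewrite /inner; under eq_bigr => k _ do
  rewrite mxE rmorphXn /= -exprMn (prim_root_mulJ N_gt0 w_prim) expr1n.
by rewrite sumr_const card_ord.
Qed.

Lemma r_m_dim0 {R : realType} {N : nat} (F G : 'I_N -> 'cV[R[i]]_0) (m : nat) :
  r_m m F G = 0.
Proof.
apply/le_anti; rewrite r_m_ge0 andbT; apply: r_m_le => // L _.
by apply: spec_rad_le => // l /eigenvalueP [v _]; rewrite (thinmx0 v) eqxx.
Qed.

Lemma r2_value_dim0 {R : realType} (N : nat) : r2_value R 0 N = 0.
Proof. by rewrite /r2_value /r1_value /cross_value !mul0r sqrtr0 addr0. Qed.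

Lemma r1_eq {R : realType} {n N : nat} : (n < N)%N -> r1 R n N = (r1_value R n N)%:E.
Proof.
move=> ltnN; have [F0 [G0 [FG0_pair FG0_1u]]] := exists_one_uniform_dual_pair R ltnN.
apply/le_anti/andP; split.
  apply: le_trans (ereal_inf_lbound (ex_intro2 _ _ (F0, G0) _ erefl)) _.
    exact: FG0_pair.
  rewrite lee_fin /= r_m1_le ?r1_value_ge0 // => i.
  rewrite (one_uniform_diag ltnN FG0_pair.2 FG0_1u) cmod_realC.
  by rewrite ger0_norm ?r1_value_ge0.
apply: le_ereal_inf_tmp => _ [[F G] [_ FG_dual] <-].
by rewrite lee_fin r1_value_le_r_m1.
Qed.

Lemma R1_diag {R : realType} {n N : nat} (F G : 'I_N -> 'cV[R[i]]_n) : (n < N)%N ->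
  R1 R n N (F, G) <->
  dual_pair F G /\ forall i, inner (F i) (G i) = ((r1_value R n N)%:C)%C.
Proof.
move=> ltnN; rewrite /R1 /= (r1_eq ltnN).
split => [[[F_frame FG_dual] [r_m1_eq]]|[[F_frame FG_dual] diag_r1]].
  by split=> //; apply: r_m1_le_diag; rewrite ?r_m1_eq.
split=> //; congr (_%:E); apply/le_anti; rewrite r1_value_le_r_m1 // andbT.
rewrite r_m1_le ?r1_value_ge0 // => i.
by rewrite diag_r1 cmod_realC ger0_norm ?r1_value_ge0.
Qed.

Lemma R1_r2_value_le_r_m2 {R : realType} {n N : nat} (F G : 'I_N -> 'cV[R[i]]_n) :
  (n < N)%N -> R1 R n N (F, G) -> r2_value R n N <= r_m 2 F G.
Proof.
move=> ltnN /(R1_diag _ _ ltnN) [[_ FG_dual] diag_r1].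
have [n0|n_gt0] := posnP n; last exact: r2_value_le_r_m2.
have -> : r2_value R n N = 0 by rewrite n0 r2_value_dim0.
exact: r_m_ge0.
Qed.

Lemma R1_r_m2_eq_r2_valueP {R : realType} {n N : nat} (F G : 'I_N -> 'cV[R[i]]_n) :
  (n < N)%N -> R1 R n N (F, G) -> (r_m 2 F G = r2_value R n N <-> two_uniform F G).
Proof.
case: n F G => [|n] F G ltnN /(R1_diag _ _ ltnN) [[_ FG_dual] diag_r1].
  have inner0 (x y : 'cV[R[i]]_0) : inner x y = 0 by rewrite /inner big_ord0.
  rewrite r_m_dim0 r2_value_dim0; split=> // _.
  by split; [exists 0 | exists 0] => *; rewrite !inner0 ?mul0r.
split => [r_m2_eq|FG_2u]; first by apply: two_uniform_of_r_m2_le; rewrite ?r_m2_eq.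
by apply/le_anti; rewrite r_m2_le_r2_value // r2_value_le_r_m2.
Qed.

Theorem theorem4p4 (R : realType) (n N : nat) :
  (n < N)%N ->
  let bound : R := n%:R / N%:R +
      Num.sqrt (n%:R * (N - n)%:R / (N%:R ^+ 2 * (N - 1)%:R)) in
  ((bound%:E <= r2 R n N)%E) /\
  ((exists (F G : 'I_N -> 'cV[R[i]]_n), dual_pair F G /\ two_uniform F G) ->
     r2 R n N = bound%:E /\
     (forall (F G : 'I_N -> 'cV[R[i]]_n), dual_pair F G ->
        (R2 R n N (F, G) <-> two_uniform F G))).
Proof.
move=> ltnN bound; rewrite -/(r2_value R n N) {}/bound.
have r2_ge : ((r2_value R n N)%:E <= r2 R n N)%E.
  apply: le_ereal_inf_tmp => _ [[F G] FG_R1 <-].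
  by rewrite lee_fin R1_r2_value_le_r_m2.
split => // -[F0 [G0 [FG0_pair FG0_2u]]].
have two_uniform_R1 F G : dual_pair F G -> two_uniform F G -> R1 R n N (F, G).
  move=> FG_pair FG_2u; apply/(R1_diag _ _ ltnN); split => //.
  exact: one_uniform_diag ltnN FG_pair.2 FG_2u.1.
have r2E : r2 R n N = (r2_value R n N)%:E.
  have FG0_R1 := two_uniform_R1 F0 G0 FG0_pair FG0_2u.
  apply/le_anti; rewrite r2_ge andbT.
  apply: le_trans (ereal_inf_lbound (ex_intro2 _ _ (F0, G0) _ erefl)) _.
    exact: FG0_R1.
  by rewrite /= ((R1_r_m2_eq_r2_valueP _ _ ltnN FG0_R1).2 FG0_2u).
split => // F G FG_pair; rewrite /R2 /= r2E; split => [[FG_R1 [r_m2_eq]]|FG_2u].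
  exact/(R1_r_m2_eq_r2_valueP _ _ ltnN FG_R1).
have FG_R1 := two_uniform_R1 F G FG_pair FG_2u.
by split => //; congr (_%:E); apply/(R1_r_m2_eq_r2_valueP _ _ ltnN FG_R1).
Qed.
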